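(* Let $L$ be a compact convex subset of $\mathbb{R}^n$, and let $Q$ be a polytope in $\mathbb{R}^n$ having at most $d+1$ vertices, where $d < n$. Suppose that, for every $d$-dimensional linear subspace $\xi$, there exists $v \in \xi$ such that $Q_\xi + v \subseteq L_\xi$. Then there exists $v_0 \in \mathbb{R}^n$ such that $Q + v_0 \subseteq L$.
   Context: For a set $S\subseteq\mathbb{R}^n$ and a linear subspace $\xi$, $S_\xi$ denotes the orthogonal projection of $S$ onto $\xi$. *)

From HB Require Import structures.
From mathcomp Require Import all_boot all_order all_algebra.
From mathcomp Require Import all_classical all_reals all_analysis.
Import numFieldNormedType.Exports.
Set Implicit Arguments. Unset Strict Implicit. Unset Printing Implicit Defensive.
Import Order.TTheory GRing.Theory Num.Theory.
Local Open Scope classical_set_scope.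
Local Open Scope ring_scope.

Definition convexR (R : realType) (n : nat) (S : set 'rV[R]_n) : Prop :=
  forall x y t, S x -> S y -> 0 <= t <= 1 -> S (t *: x + (1 - t) *: y).

Definition conv_hull (R : realType) (n k : nat) (p : 'I_k -> 'rV[R]_n)
  : set 'rV[R]_n :=
  [set x | exists w : 'I_k -> R, (forall i, 0 <= w i) /\
     \sum_(i < k) w i = 1 /\ x = \sum_(i < k) w i *: p i].

Definition dotR (R : realType) (n : nat) (x y : 'rV[R]_n) : R := (x *m y^T) 0 0.

(* orthogonal projection S_xi of S onto the linear subspace xi = row space of U:
   the set of points p in xi such that x - p is orthogonal to xi for some x in S *)
Definition oproj (R : realType) (n : nat) (U : 'M[R]_n) (S : set 'rV[R]_n)
  : set 'rV[R]_n :=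
  [set q | exists2 x, S x & (q <= U)%MS /\
     (forall w : 'rV[R]_n, (w <= U)%MS -> dotR (x - q) w = 0)].

Definition translate (R : realType) (n : nat) (S : set 'rV[R]_n) (v : 'rV[R]_n)
  : set 'rV[R]_n := [set y + v | y in S].

From HB Require Import structures.
From mathcomp Require Import all_boot all_order all_algebra.
From mathcomp Require Import all_classical all_reals all_analysis.
From mathcomp Require Import ring lra.
Import numFieldNormedType.Exports.
Import Order.TTheory GRing.Theory Num.Theory.
Local Open Scope classical_set_scope.
Local Open Scope ring_scope.
Set Implicit Arguments. Unset Strict Implicit.

(* Choose points [X j] of [L] minimising the moment of inertia of the
   displacements [X j - p j] about their centroid [m].  Minimality and the
   convexity of [L] give [<a j, l - X j> >= 0] for every [l] in [L], where
   [a j = X j - p j - m].  The [a j] sum to zero, so they span a space of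
   dimension at most [k - 1 <= d], contained in some [d]-dimensional [U].  For
   this [U] the hypothesis yields [v] and points [l j] of [L] with
   [<l j, a j> = <p j + v, a j>], hence [|a j|^2 <= <a j, v - m>]; summing over
   [j] gives [a j = 0].  Thus every [p j + m = X j] lies in [L], and so does
   the whole translate [conv_hull p + m]. *)

Section DotProduct.
Context {R : realType} {n : nat}.
Implicit Types x y z : 'rV[R]_n.

Lemma dotE x y : dotR x y = \sum_i x 0 i * y 0 i.
Proof. by rewrite /dotR !mxE; apply: eq_bigr => i _; rewrite mxE. Qed.

Lemma dotC x y : dotR x y = dotR y x.
Proof. by rewrite !dotE; apply: eq_bigr => i _; rewrite mulrC. Qed.

Lemma dotDl x y z : dotR (x + y) z = dotR x z + dotR y z.
Proof. by rewrite !dotE -big_split; apply: eq_bigr => i _; rewrite !mxE mulrDl. Qed.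

Lemma dotDr x y z : dotR z (x + y) = dotR z x + dotR z y.
Proof. by rewrite ![dotR z _]dotC dotDl. Qed.

Lemma dotZl a x y : dotR (a *: x) y = a * dotR x y.
Proof. by rewrite !dotE mulr_sumr; apply: eq_bigr => i _; rewrite !mxE mulrA. Qed.

Lemma dotZr a x y : dotR y (a *: x) = a * dotR y x.
Proof. by rewrite ![dotR y _]dotC dotZl. Qed.

Lemma dotBl x y z : dotR (x - y) z = dotR x z - dotR y z.
Proof. by rewrite dotDl -scaleN1r dotZl mulN1r. Qed.

Lemma dotBr x y z : dotR z (x - y) = dotR z x - dotR z y.
Proof. by rewrite ![dotR z _]dotC dotBl. Qed.

Lemma dot0l x : dotR 0 x = 0.
Proof. by rewrite -(subrr x) dotBl subrr. Qed.

Lemma dot_suml (I : Type) (s : seq I) (f : I -> 'rV[R]_n) y :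
  dotR (\sum_(i <- s) f i) y = \sum_(i <- s) dotR (f i) y.
Proof.
elim: s => [|a s IH]; first by rewrite !big_nil dot0l.
by rewrite !big_cons dotDl IH.
Qed.

Lemma dotDD x y : dotR (x + y) (x + y) = dotR x x + 2 * dotR x y + dotR y y.
Proof. by rewrite dotDl !dotDr (dotC y x); ring. Qed.

Lemma dot_ge0 x : 0 <= dotR x x.
Proof. by rewrite dotE sumr_ge0 // => i _; rewrite -expr2 sqr_ge0. Qed.

Lemma dot_eq0 x : dotR x x = 0 -> x = 0.
Proof.
rewrite dotE => /eqP; rewrite psumr_eq0 => [/allP x0|i _]; last first.
  by rewrite -expr2 sqr_ge0.
apply/rowP => i; rewrite mxE.
by have := x0 i (mem_index_enum _); rewrite /= -expr2 sqrf_eq0 => /eqP.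
Qed.

Lemma continuous_dot_self : continuous (fun x => dotR x x).
Proof.
under eq_fun do rewrite dotE.
move=> x; apply: cvg_big => [||i _]; [exact: add_continuous|exact: nbhs_filter|].
by apply: continuousM; exact: coord_continuous.
Qed.

End DotProduct.

Section Inertia.
Context {R : realType} {n k : nat}.
Implicit Types Z : 'I_k -> 'rV[R]_n.

Definition centroid Z : 'rV[R]_n := k%:R^-1 *: \sum_i Z i.

Definition inertia Z : R :=
  \sum_j dotR (Z j - centroid Z) (Z j - centroid Z).

Hypothesis k_gt0 : (0 < k)%N.

Lemma sum_sub_centroid Z : \sum_j (Z j - centroid Z) = 0.
Proof.
rewrite sumrB sumr_const card_ord -scaler_nat scalerA mulfV ?scale1r ?subrr //.
by rewrite pnatr_eq0 -lt0n.
Qed.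

Lemma inertia_le Z c : inertia Z <= \sum_j dotR (Z j - c) (Z j - c).
Proof.
have -> : \sum_j dotR (Z j - c) (Z j - c) =
    inertia Z + \sum_j 2 * dotR (Z j - centroid Z) (centroid Z - c)
    + \sum_(j < k) dotR (centroid Z - c) (centroid Z - c).
  by rewrite -!big_split /=; apply: eq_bigr => j _; rewrite -dotDD addrA subrK.
rewrite -mulr_sumr -dot_suml sum_sub_centroid dot0l mulr0 addr0 lerDl.
by apply: sumr_ge0 => j _; exact: dot_ge0.
Qed.

Lemma inertia_shift_le Z j u :
  inertia (fun i => if i == j then Z i + u else Z i) <=
  inertia Z + 2 * dotR (Z j - centroid Z) u + dotR u u.
Proof.
apply: le_trans (inertia_le _ (centroid Z)) _.
rewrite /inertia (bigD1 j) //= [in leRHS](bigD1 j) //= eqxx.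
under eq_bigr => i /negbTE -> do [].
by rewrite addrAC (dotDD (Z j - centroid Z)); lra.
Qed.

End Inertia.

Lemma continuous_inertia (R : realType) (n k : nat) (T : topologicalType)
    (f : 'I_k -> T -> 'rV[R]_n) :
  (forall j, continuous (f j)) -> continuous (fun x => inertia (f ^~ x)).
Proof.
move=> cf x; have cS : {for x, continuous (fun y => \sum_i f i y)}.
  by apply: cvg_big => [|i _]; [exact: add_continuous|exact: cf].
apply: cvg_big => [|j _]; first exact: add_continuous.
apply: (@continuous_comp _ _ _ (fun y => f j y - centroid (f ^~ y)) (fun v => dotR v v));
  last exact: continuous_dot_self.
by apply: continuousB; [exact: cf|exact: continuousZl_tmp].
Qed.

Lemma entry_continuous (T : topologicalType) (m n : nat) i j :
  continuous (fun M : 'M[T]_(m, n) => M i j).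
Proof.
move=> M A /= MA; exists (fun i' j' => if (i' == i) && (j' == j) then A else setT).
  by move=> i' j'; case: ifP => [/andP[/eqP -> /eqP ->] //|_]; exact: filterT.
by move=> N /= /(_ i j); rewrite !eqxx.
Qed.

Lemma inertia_attains_min (R : realType) (n k : nat) (L : set 'rV[R]_n)
    (p : 'I_k -> 'rV[R]_n) :
  compact L -> L !=set0 ->
  exists2 X : 'I_k -> 'rV[R]_n, (forall j, L (X j)) &
    forall Y, (forall j, L (Y j)) ->
      inertia (fun j => X j - p j) <= inertia (fun j => Y j - p j).
Proof.
move=> cL [l Ll].
pose S := [set M : 'rV['rV[R]_n]_k | forall j, L (M ord0 j)].
have cS : compact S := rV_compact (fun _ : 'I_k => cL).
have S0 : S !=set0 by exists (const_mx l) => j; rewrite mxE.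
pose F (M : 'rV['rV[R]_n]_k) := inertia (fun j => M ord0 j - p j).
have cF : continuous F.
  apply: continuous_inertia => j M.
  by apply: continuousB; [exact: entry_continuous|exact: cst_continuous].
have [M /[1!inE] SM Mmin] := compact_EVT_min S0 cS (continuous_subspaceT cF).
exists (M ord0) => // Y LY.
have := Mmin (\row_j Y j) ltac:(by rewrite inE => j; rewrite mxE).
rewrite /F; suff -> : (fun j => (\row_j Y j) ord0 j - p j) = (fun j => Y j - p j) by [].
by apply/funext => j; rewrite mxE.
Qed.

Lemma linear_coef_ge0 (R : realFieldType) (c q : R) :
  (forall t, 0 < t <= 1 -> 0 <= 2 * t * c + t ^+ 2 * q) -> 0 <= c.
Proof.
move=> small_ge0; rewrite leNgt; apply/negP => c_lt0.
have q_gt0 : 0 < q.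
  by have := small_ge0 1; rewrite ltr01 lexx expr1n mul1r mulr1 => /(_ isT); lra.
(* [t = -c / (q - c)] lies in (0, 1] and makes [2 t c + t^2 q = t c (1 + t)] negative. *)
pose t := - c / (q - c).
have t_gt0 : 0 < t by rewrite divr_gt0 // ?oppr_gt0; lra.
have t_le1 : t <= 1 by rewrite ler_pdivrMr ?mul1r; lra.
have tE : t * (q - c) = - c by rewrite /t divfK //; apply/eqP; lra.
have := small_ge0 t; rewrite t_gt0 t_le1 => /(_ isT); nra.
Qed.

Lemma inertia_min_variation (R : realType) (n k : nat) (L : set 'rV[R]_n)
    (p X : 'I_k -> 'rV[R]_n) :
  (0 < k)%N -> convexR L -> (forall j, L (X j)) ->
  (forall Y, (forall j, L (Y j)) ->
     inertia (fun j => X j - p j) <= inertia (fun j => Y j - p j)) ->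
  forall j l, L l ->
    0 <= dotR (X j - p j - centroid (fun i => X i - p i)) (l - X j).
Proof.
move=> k_gt0 convL LX Xmin j l Ll; set w := l - X j.
apply: (@linear_coef_ge0 _ _ (dotR w w)) => t /andP[t_gt0 t_le1].
pose Y i := if i == j then X i + t *: w else X i.
have LY i : L (Y i).
  rewrite /Y; case: eqP => [->|_] //.
  have -> : X j + t *: w = t *: l + (1 - t) *: X j.
    by rewrite /w scalerBr scalerBl scale1r addrCA.
  by apply: convL => //; rewrite t_le1 ltW.
have YpE : (fun i => Y i - p i) =
    (fun i => if i == j then X i - p i + t *: w else X i - p i).
  by apply/funext => i; rewrite /Y; case: eqP => // _; rewrite addrAC.
have := Xmin Y LY; rewrite YpE.
have := inertia_shift_le k_gt0 (fun i => X i - p i) j (t *: w).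
by rewrite !dotZr !dotZl expr2 -mulrA; lra.
Qed.

Lemma exists_supmx_rank (F : fieldType) (m n r : nat) (A : 'M[F]_(m, n)) :
  (\rank A <= r <= n)%N -> exists2 U : 'M[F]_n, (A <= U)%MS & \rank U = r.
Proof.
elim: r => [|r IH] /andP[rA rn].
  exists 0; rewrite ?mxrank0 //.
  by move: rA; rewrite leqn0 mxrank_eq0 => /eqP ->; exact: sub0mx.
have [rA_eq | rA_lt] := eqVneq (\rank A) r.+1.
  by exists <<A>>%MS; rewrite ?genmxE.
have [U AU rU] := IH ltac:(by rewrite -ltnS ltn_neqAle rA_lt rA ltnW).
have /row_subPn[i U_i] : ~~ (1%:M <= U)%MS by rewrite sub1mx /row_full rU ltn_eqF.
exists (U + row i 1%:M)%MS; first exact: submx_trans AU (addsmxSl _ _).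
apply/eqP; rewrite eqn_leq; apply/andP; split.
  rewrite -rU -[X in (_ <= X)%N]addn1; apply: leq_trans (mxrank_adds_leqif _ _) _.
  by rewrite leq_add2l rank_leq_row.
rewrite -rU rank_ltmx // ltmxE addsmxSl /=.
by apply: contra U_i; exact: submx_trans (addsmxSr _ _).
Qed.

Lemma rank_lt_sum_rows_eq0 (F : fieldType) (k n : nat) (A : 'M[F]_(k, n)) :
  (0 < k)%N -> \sum_i row i A = 0 -> (\rank A < k)%N.
Proof.
move=> k_gt0 sumA0; pose one : 'rV[F]_k := const_mx 1.
have one_ker : (one <= kermx A)%MS.
  by apply/sub_kermxP; rewrite mulmx_sum_row -[RHS]sumA0; under eq_bigr do rewrite mxE scale1r.
have one_neq0 : one != 0.
  by apply/eqP => /rowP/(_ (Ordinal k_gt0)); rewrite !mxE => /eqP; rewrite oner_eq0.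
by have := mxrankS one_ker; rewrite mxrank_ker rank_rV one_neq0 subn_gt0.
Qed.

Lemma orthogonal_projection_exists (R : realType) (n : nat) (U : 'M[R]_n)
    (x : 'rV[R]_n) :
  exists2 q, (q <= U)%MS & forall w, (w <= U)%MS -> dotR (x - q) w = 0.
Proof.
set B := row_base U; set G := B *m B^T.
have G_unit : G \in unitmx.
  rewrite -row_free_unit -kermx_eq0; apply/eqP/row_matrixP => i; rewrite row0.
  set y := row i (kermx G).
  have yG : y *m G = 0 by apply/sub_kermxP; rewrite row_sub.
  have yB : y *m B = 0.
    by apply: dot_eq0; rewrite /dotR trmx_mul mulmxA -(mulmxA y) yG mul0mx mxE.
  by apply/eqP; rewrite -(mulmx_free_eq0 _ (row_base_free U)) yB.
(* The least-squares solution [q = x B^T (B B^T)^-1 B]. *)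
exists (x *m B^T *m invmx G *m B).
  by apply: submx_trans (submxMl _ _) _; rewrite eq_row_base.
move=> w; rewrite -(eq_row_base U) => /submxP[z ->].
have xq_perp : (x - x *m B^T *m invmx G *m B) *m B^T = 0.
  by rewrite mulmxBl -(mulmxA _ B) -(mulmxA _ (invmx G)) mulVmx // mulmx1 subrr.
by rewrite -/B /dotR (trmx_mul z) mulmxA xq_perp mul0mx mxE.
Qed.

Lemma oproj_translate_dot (R : realType) (n : nat) (U : 'M[R]_n)
    (Q L : set 'rV[R]_n) v x :
  translate (oproj U Q) v `<=` oproj U L -> Q x ->
  exists2 l, L l & forall w, (w <= U)%MS -> dotR l w = dotR (x + v) w.
Proof.
move=> QvL Qx; have [q qU xq_perp] := orthogonal_projection_exists U x.
have [|l Ll [_ lqv_perp]] := QvL (q + v); first by exists q => //; exists x.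
exists l => // w wU; move: (xq_perp w wU) (lqv_perp w wU).
by rewrite !dotBl !dotDl; lra.
Qed.

Lemma conv_hull_vertex (R : realType) (n k : nat) (p : 'I_k -> 'rV[R]_n) i :
  conv_hull p (p i).
Proof.
exists (fun j => (j == i)%:R); split; first by move=> j; rewrite ler0n.
rewrite (bigD1 i) //= eqxx big1 ?addr0 => [|j /negbTE ->] //.
split=> //; rewrite (bigD1 i) //= eqxx scale1r big1 ?addr0 // => j /negbTE ->.
by rewrite scale0r.
Qed.

Lemma convexR_sum (R : realType) (n k : nat) (L : set 'rV[R]_n)
    (w : 'I_k -> R) (y : 'I_k -> 'rV[R]_n) :
  convexR L -> (forall i, 0 <= w i) -> \sum_i w i = 1 -> (forall i, L (y i)) ->
  L (\sum_i w i *: y i).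
Proof.
move=> convL; elim: k w y => [|k IH] w y w_ge0 w1 Ly.
  by move: w1; rewrite big_ord0 => /eqP; rewrite eq_sym oner_eq0.
rewrite big_ord_recl; rewrite big_ord_recl in w1.
set s := \sum_(i < k) w (lift ord0 i) in w1.
have s_ge0 : 0 <= s by rewrite sumr_ge0.
have [s0|s_neq0] := eqVneq s 0.
  move/eqP: (s0); rewrite psumr_eq0 // => /allP w0.
  rewrite big1 ?addr0 => [|i _]; last by rewrite (eqP (w0 i (mem_index_enum _))) scale0r.
  by move: w1; rewrite s0 addr0 => ->; rewrite scale1r.
pose z := \sum_(i < k) (w (lift ord0 i) / s) *: y (lift ord0 i).
have Lz : L z.
  apply: IH => [i||i]; [exact: divr_ge0 | by rewrite -mulr_suml -/s mulfV | exact: Ly].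
have -> : \sum_(i < k) w (lift ord0 i) *: y (lift ord0 i) = s *: z.
  by rewrite scaler_sumr; apply: eq_bigr => i _; rewrite scalerA mulrCA mulfV ?mulr1.
have -> : s = 1 - w ord0 by rewrite -w1 addrC addKr.
by apply: convL => //; rewrite w_ge0 -w1 lerDl.
Qed.

Lemma conv_hull_translate_sub (R : realType) (n k : nat) (L : set 'rV[R]_n)
    (p : 'I_k -> 'rV[R]_n) v :
  convexR L -> (forall i, L (p i + v)) -> translate (conv_hull p) v `<=` L.
Proof.
move=> convL Lpv _ [_ [w [w_ge0 [w1 ->]]] <-].
have -> : \sum_i w i *: p i + v = \sum_i w i *: (p i + v).
  by rewrite (eq_bigr _ (fun i _ => scalerDr _ _ _)) big_split /= -scaler_suml w1 scale1r.
exact: convexR_sum.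
Qed.

Lemma sum_eq0_dot_le_eq0 (R : realType) (n k : nat) (a : 'I_k -> 'rV[R]_n) b :
  \sum_j a j = 0 -> (forall j, dotR (a j) (a j) <= dotR (a j) b) ->
  forall j, a j = 0.
Proof.
move=> suma0 a_le j; apply: dot_eq0.
have : \sum_i dotR (a i) (a i) <= dotR (\sum_i a i) b.
  by rewrite dot_suml; apply: ler_sum => i _; exact: a_le.
rewrite suma0 dot0l => sum_le0.
have /eqP : \sum_i dotR (a i) (a i) = 0.
  by apply/le_anti; rewrite sum_le0 sumr_ge0 // => i _; exact: dot_ge0.
rewrite psumr_eq0 => [/allP/(_ j (mem_index_enum _))/eqP //|i _]; exact: dot_ge0.
Qed.

Theorem lemma2p6 (R : realType) (n d k : nat) (L : set 'rV[R]_n)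
    (p : 'I_k -> 'rV[R]_n) :
  (d < n)%N -> compact L -> convexR L -> (0 < k <= d.+1)%N ->
  (forall U : 'M[R]_n, \rank U = d ->
     exists2 v, (v <= U)%MS &
       translate (oproj U (conv_hull p)) v `<=` oproj U L) ->
  exists v0 : 'rV[R]_n, translate (conv_hull p) v0 `<=` L.
Proof.
move=> ltdn cL convL /andP[k_gt0 lekd] proj_sub.
have L_neq0 : L !=set0.
  have rank_d := rank_pid_mx R (ltnW ltdn) (ltnW ltdn).
  have [v _ /oproj_translate_dot sub] := proj_sub _ rank_d.
  by have [l Ll _] := sub _ (conv_hull_vertex p (Ordinal k_gt0)); exists l.
have [X LX Xmin] := inertia_attains_min p cL L_neq0.
pose m := centroid (fun j => X j - p j); pose a j := X j - p j - m.
have suma0 : \sum_j a j = 0 by exact: sum_sub_centroid.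
have a_var j l : L l -> 0 <= dotR (a j) (l - X j) by exact: inertia_min_variation.
have Xa j : X j = a j + m + p j by rewrite /a !subrK.
have [U aU rU] : exists2 U : 'M[R]_n, ((\matrix_j a j) <= U)%MS & \rank U = d.
  apply: exists_supmx_rank; rewrite (ltnW ltdn) andbT -ltnS (leq_trans _ lekd) //.
  by apply: rank_lt_sum_rows_eq0 => //; rewrite -[RHS]suma0; apply: eq_bigr => j _; rewrite rowK.
have ajU j : (a j <= U)%MS by rewrite -(rowK a j); exact: submx_trans (row_sub _ _) aU.
have [v _ /oproj_translate_dot sub] := proj_sub U rU.
clearbody a m.
have a0 : forall j, a j = 0.
  apply: (sum_eq0_dot_le_eq0 (b := v - m)) => // j.
  have [l Ll lv] := sub _ (conv_hull_vertex p j).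
  move: (a_var j l Ll) (lv _ (ajU j)); rewrite Xa (dotC l) (dotC (p j + v)).
  by rewrite !dotBr !dotDr; lra.
exists m; apply: conv_hull_translate_sub => // j.
by have := LX j; rewrite Xa a0 add0r addrC.
Qed.
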